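(* Consider a downlink THz-NOMA system in which a base station serves $K=2$ legacy primary users on two fixed (pre-configured) beams $\mathbf{f}_1,\mathbf{f}_2$, both primary users using the same transmit power $\rho^P>0$, and serves $M=1$ secondary user on these beams with total power budget $P^{\max}>0$. Let $h_k>0$ denote the secondary user's effective channel gain on beam $\mathbf{f}_k$, $k\in\{1,2\}$, and let $\rho_k\ge 0$ denote the secondary user's power on beam $\mathbf{f}_k$. Assume that the primary users' target data rates tend to $0$ (so that the primary users' quality-of-service and the secondary user's SIC-decodability constraints become inactive) and that the noise power $\sigma^2\to 0$ (high SNR). In this regime the joint beam and power allocation problem is $$\max_{\rho_1,\rho_2\ge 0,\ \rho_1+\rho_2\le P^{\max}} \; F(\rho_1,\rho_2)=\log_2\!\Big(1+\frac{h_1\rho_1}{h_2\rho_2+h_2\rho^P}\Big)+\log_2\!\Big(1+\frac{h_2\rho_2}{h_1\rho_1+h_1\rho^P}\Big),$$ and the greedy scheduling problem (use a single beam $\mathbf{f}_k$ with all other beams idle) is $\max_{k\in\{1,2\}}\max_{0\le \rho_k\le P^{\max}}\log_2\!\big(1+\frac{h_k\rho_k}{h_{k'}\rho^P}\big)$ with $k'\neq k$, whose solution is $\rho_{k^*}=P^{\max}$ on the beam $k^*=\arg\max_{k}h_k$ and $0$ on the other beam. Then the optimal solution of the joint problem is the same as that of the greedy scheduling problem: $\rho_{k^*}=P^{\max}$, $\rho_{k'}=0$ (with $k^*=\arg\max_k h_k$, $k'\ne k^*$) maximizes $F$ over the feasible set.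
   Context: Effective gains: $h_k=\frac{|a^S|^2}{\mathrm{PL}^S}|\mathbf{a}^H(\theta^S)\mathbf{f}_k|^2$, where $a^S$ is the secondary user's fading coefficient, $\mathrm{PL}^S$ its path loss, $\theta^S$ its angle of departure, and $\mathbf{a}(\theta)=[1,e^{-j2\pi f_c d\sin\theta/c},\dots,e^{-j2(N-1)\pi f_c d\sin\theta/c}]^T$ the array steering vector. The secondary user's signal on beam $k$ suffers interference from the primary signal and the secondary signal on the other beam $k'$ (inter-beam interference $h_{k'}(\rho^P+\rho_{k'})$); primary users treat secondary signals as noise and the secondary user decodes the primary signal on its beam first via successive interference cancellation. Logarithms are base 2. *)

From Stdlib Require Import Reals.
Open Scope R_scope.

Definition log2 (x : R) : R := ln x / ln 2.

Definition Fjoint (h1 h2 rhoP rho1 rho2 : R) : R :=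
  log2 (1 + h1 * rho1 / (h2 * rho2 + h2 * rhoP))
  + log2 (1 + h2 * rho2 / (h1 * rho1 + h1 * rhoP)).

Definition feasible (Pmax rho1 rho2 : R) : Prop :=
  0 <= rho1 /\ 0 <= rho2 /\ rho1 + rho2 <= Pmax.

(* With S = h1 rho1 + h2 rho2, the stronger beam's SINR factor is
   (S + h2 rhoP) / (h2 (rho2 + rhoP)), while the weaker beam's (h2 <= h1) is
   at most 1 + rho2 / rhoP = (rho2 + rhoP) / rhoP.  The product of the two is
   thus at most 1 + S / (h2 rhoP) <= 1 + h1 Pmax / (h2 rhoP), which is exactly
   the rate factor of putting all power on the stronger beam. *)
From Stdlib Require Import Reals Lra Psatz.
Open Scope R_scope.

Lemma log2_1 : log2 1 = 0.
Proof. unfold log2; rewrite ln_1; field; apply ln_neq_0; lra. Qed.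

Lemma log2_mult (a b : R) : 0 < a -> 0 < b -> log2 (a * b) = log2 a + log2 b.
Proof. intros Ha Hb; unfold log2; rewrite ln_mult by assumption; field; apply ln_neq_0; lra. Qed.

Lemma log2_le (a b : R) : 0 < a -> a <= b -> log2 a <= log2 b.
Proof.
  intros Ha [Hab | <-]; [| lra].
  assert (Hln2 : 0 < ln 2) by (rewrite <- ln_1; apply ln_increasing; lra).
  unfold log2, Rdiv; apply Rmult_le_compat_r.
  - left; apply Rinv_0_lt_compat, Hln2.
  - left; apply ln_increasing; assumption.
Qed.

Lemma one_plus_div_pos (a b : R) : 0 <= a -> 0 < b -> 0 < 1 + a / b.
Proof.
  intros Ha Hb.
  assert (0 <= a / b) by (unfold Rdiv; apply Rmult_le_pos; [| left; apply Rinv_0_lt_compat]; lra).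
  lra.
Qed.

Lemma one_plus_div_le (a b c : R) : 0 < c -> a <= b -> 1 + a / c <= 1 + b / c.
Proof.
  intros Hc Hab; apply Rplus_le_compat_l; unfold Rdiv.
  apply Rmult_le_compat_r; [left; apply Rinv_0_lt_compat |]; assumption.
Qed.

Lemma weak_beam_factor_le (h1 h2 p x y : R) :
  0 < h2 -> h2 <= h1 -> 0 < p -> 0 <= x -> 0 <= y ->
  1 + h2 * y / (h1 * x + h1 * p) <= 1 + y / p.
Proof.
  intros Hh2 Hh12 Hp Hx Hy.
  assert (Hden : 0 < h1 * x + h1 * p) by nra.
  apply Rplus_le_compat_l.
  apply (Rmult_le_reg_r (p * (h1 * x + h1 * p))); [nra |].
  replace (h2 * y / (h1 * x + h1 * p) * (p * (h1 * x + h1 * p))) with (h2 * y * p)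
    by (field; lra).
  replace (y / p * (p * (h1 * x + h1 * p))) with (y * (h1 * x + h1 * p)) by (field; lra).
  assert (0 <= (h1 * x) * y) by (apply Rmult_le_pos; nra).
  assert (0 <= (h1 - h2) * (y * p)) by (apply Rmult_le_pos; nra).
  nra.
Qed.

Lemma strong_beam_factor_mult (h1 h2 p x y : R) :
  0 < h2 -> 0 < p -> 0 <= y ->
  (1 + h1 * x / (h2 * y + h2 * p)) * (1 + y / p) = 1 + (h1 * x + h2 * y) / (h2 * p).
Proof.
  intros Hh2 Hp Hy.
  assert (Hden : 0 < h2 * y + h2 * p) by nra.
  field; repeat split; lra.
Qed.

Lemma sinr_factors_le (h1 h2 p x y : R) :
  0 < h2 -> h2 <= h1 -> 0 < p -> 0 <= x -> 0 <= y ->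
  (1 + h1 * x / (h2 * y + h2 * p)) * (1 + h2 * y / (h1 * x + h1 * p))
  <= 1 + h1 * (x + y) / (h2 * p).
Proof.
  intros Hh2 Hh12 Hp Hx Hy.
  apply Rle_trans with (1 + (h1 * x + h2 * y) / (h2 * p)).
  - rewrite <- strong_beam_factor_mult by assumption.
    apply Rmult_le_compat_l.
    + left; apply one_plus_div_pos; nra.
    + apply weak_beam_factor_le; assumption.
  - apply one_plus_div_le; nra.
Qed.

Lemma Fjoint_single_beam (h1 h2 p P : R) :
  0 < h1 -> 0 < h2 -> 0 < p -> 0 <= P ->
  Fjoint h1 h2 p P 0 = log2 (1 + h1 * P / (h2 * p)).
Proof.
  intros Hh1 Hh2 Hp HP; unfold Fjoint.
  replace (h2 * 0 / (h1 * P + h1 * p)) with 0 by (field; nra).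
  rewrite Rplus_0_r, log2_1, Rmult_0_r, Rplus_0_l, Rplus_0_r; reflexivity.
Qed.

Lemma Fjoint_le_single_beam (h1 h2 p P x y : R) :
  0 < h2 -> h2 <= h1 -> 0 < p -> feasible P x y ->
  Fjoint h1 h2 p x y <= Fjoint h1 h2 p P 0.
Proof.
  intros Hh2 Hh12 Hp (Hx & Hy & Hxy).
  rewrite Fjoint_single_beam by lra.
  assert (Hstrong : 0 < 1 + h1 * x / (h2 * y + h2 * p)) by (apply one_plus_div_pos; nra).
  assert (Hweak : 0 < 1 + h2 * y / (h1 * x + h1 * p)) by (apply one_plus_div_pos; nra).
  unfold Fjoint; rewrite <- log2_mult by assumption.
  apply log2_le; [nra |].
  apply Rle_trans with (1 + h1 * (x + y) / (h2 * p)); [apply sinr_factors_le; assumption |].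
  apply one_plus_div_le; nra.
Qed.

Lemma Fjoint_swap (h1 h2 p x y : R) : Fjoint h1 h2 p x y = Fjoint h2 h1 p y x.
Proof. unfold Fjoint; ring. Qed.

Theorem lemma1 (h1 h2 rhoP Pmax : R) (hh1 : 0 < h1) (hh2 : 0 < h2)
  (hP : 0 < rhoP) (hPmax : 0 < Pmax) :
  (h2 <= h1 ->
     feasible Pmax Pmax 0 /\
     forall rho1 rho2, feasible Pmax rho1 rho2 ->
       Fjoint h1 h2 rhoP rho1 rho2 <= Fjoint h1 h2 rhoP Pmax 0) /\
  (h1 <= h2 ->
     feasible Pmax 0 Pmax /\
     forall rho1 rho2, feasible Pmax rho1 rho2 ->
       Fjoint h1 h2 rhoP rho1 rho2 <= Fjoint h1 h2 rhoP 0 Pmax).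
Proof.
  split; intro Hh; split; try (unfold feasible; lra).
  - intros rho1 rho2 Hfeas; apply Fjoint_le_single_beam; assumption.
  - intros rho1 rho2 (H1 & H2 & H12).
    rewrite (Fjoint_swap h1 h2 rhoP rho1), (Fjoint_swap h1 h2 rhoP 0).
    apply Fjoint_le_single_beam; try assumption.
    unfold feasible; lra.
Qed.
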